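(* Let $\mathcal{G}$ be a class of graphs on vertex set $[p]$, fix $\lambda>0$, and let $\mathcal{T}\subseteq\mathcal{G}$. For every $\epsilon>0$ and every $\epsilon$-covering $C_{\mathcal{T}}(\epsilon)$ of $\mathcal{T}$, every estimator $\phi$ satisfies $$p_{\max}\;\ge\;1-\frac{\log|C_{\mathcal{T}}(\epsilon)|+n\epsilon+\log 2}{\log|\mathcal{T}|}.$$
   Context: For a graph $G=([p],E)$ and $\lambda>0$, the Ising model is $f_G(\mathbf{x})=\frac{1}{Z}\exp\big(\sum_{(i,j)\in E}\lambda x_ix_j\big)$ on $\{-1,+1\}^p$. An estimator is a map $\phi:\{-1,+1\}^{np}\to\mathcal{G}$ applied to $n$ i.i.d. samples from $f_G$, giving $\hat G$; $p_{\max}=\max_{G\in\mathcal{G}}\Pr(\hat G\ne G)$. $D(f\|g)=\sum_x f(x)\log(f(x)/g(x))$ is the KL-divergence. An $\epsilon$-covering of $\mathcal{T}$ is a set $C_{\mathcal{T}}(\epsilon)\subseteq\mathcal{G}$ such that for every $G\in\mathcal{T}$ there is $G'\in C_{\mathcal{T}}(\epsilon)$ with $D(f_G\|f_{G'})\le\epsilon$. *)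

From mathcomp Require Import all_boot all_order all_algebra.
From mathcomp Require Import reals.
From mathcomp Require Import sequences exp.
Set Implicit Arguments. Unset Strict Implicit. Unset Printing Implicit Defensive.
Import Order.TTheory GRing.Theory Num.Theory.
Local Open Scope ring_scope.

Definition config (p : nat) := {ffun 'I_p -> bool}.
Definition spin {R : realType} (b : bool) : R := if b then 1 else -1.

(* A graph on vertex set [p] = 'I_p: its edge set, each undirected edge {i,j}
   stored once as the ordered pair (i,j) with i < j. *)
Definition graph (p : nat) := {set 'I_p * 'I_p}.
Definition is_graph (p : nat) (G : graph p) : Prop :=
  forall e, e \in G -> (e.1 < e.2)%N.

Definition ising_weight {R : realType} (p : nat) (lam : R) (G : graph p)
  (x : config p) : R :=
  expR (\sum_(e in G) lam * spin (x e.1) * spin (x e.2)).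
Definition ising_Z {R : realType} (p : nat) (lam : R) (G : graph p) : R :=
  \sum_(x : config p) ising_weight lam G x.
Definition ising {R : realType} (p : nat) (lam : R) (G : graph p)
  (x : config p) : R := ising_weight lam G x / ising_Z lam G.

Definition KL {R : realType} (T : finType) (f g : T -> R) : R :=
  \sum_(x : T) f x * ln (f x / g x).

Definition samples (n p : nat) := {ffun 'I_n -> config p}.

Definition err_prob {R : realType} (n p : nat) (lam : R)
  (phi : samples n p -> graph p) (G : graph p) : R :=
  \sum_(s : samples n p | phi s != G) \prod_(k < n) ising lam G (s k).

Definition p_max {R : realType} (n p : nat) (lam : R) (cG : {set graph p})
  (phi : samples n p -> graph p) : R :=
  \big[Num.max/0]_(G in cG) err_prob lam phi G.

Definition is_covering {R : realType} (p : nat) (lam : R) (cG T C : {set graph p})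
  (eps : R) : Prop :=
  C \subset cG /\
  forall G, G \in T -> exists2 G', G' \in C &
    KL (ising lam G) (ising lam G') <= eps.

(* Fano's method with a covering.  Let P_G be the law of the n samples under
   f_G and let Q be the uniform mixture of the laws P_c, c in C.  Since Q
   dominates P_c / |C|, D(P_G || Q) <= D(P_G || P_c) + log |C|, and the n-fold
   product multiplies divergences by n, so D(P_G || Q) <= n eps + log |C| for
   every G in T.  Conversely, the variational bound
   D(P || Q) >= E_P[log h] - E_Q[h] + 1 applied with h = w_G / 2, where w_G is
   |T| on the event {phi = G} and 1 elsewhere, and summed over G in T (these
   weights add up to at most 2 |T|), gives
   log |T| * sum_G P_G(phi = G) <= sum_G D(P_G || Q) + |T| log 2.
   Hence the average success probability is at most
   (log |C| + n eps + log 2) / log |T|, and p_max dominates the average error. *)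
From mathcomp Require Import all_boot all_order all_algebra.
From mathcomp Require Import reals sequences exp.
From mathcomp Require Import ring lra.
Import Order.TTheory GRing.Theory Num.Theory.
Local Open Scope ring_scope.
Set Implicit Arguments. Unset Strict Implicit.

Definition iid {R : realType} {T : finType} n (f : T -> R) (s : {ffun 'I_n -> T}) : R :=
  \prod_k f (s k).
Arguments iid {R T} n f s.

Section KullbackLeibler.
Variables (R : realType) (T : finType).

Lemma le_sub_mul_ln_div (a b : R) : 0 < a -> 0 < b -> a - b <= a * ln (a / b).
Proof.
move=> a0 b0; have ba0 : 0 < b / a by exact: divr_gt0.
have lnba : ln (b / a) <= b / a - 1.
  by have := @le_ln1Dx R (b / a - 1); rewrite [1 + _]addrC subrK; apply; lra.
have -> : ln (a / b) = - ln (b / a) by rewrite -lnV ?posrE // invf_div.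
have : a * ln (b / a) <= a * (b / a - 1) by rewrite ler_pM2l.
by rewrite mulrBr mulr1 mulrCA divff ?gt_eqF // mulr1 mulrN; lra.
Qed.

Lemma KL_ge_variational (f g h : T -> R) :
  (forall x, 0 < f x) -> (forall x, 0 < g x) -> (forall x, 0 < h x) ->
  \sum_x f x = 1 ->
  \sum_x f x * ln (h x) - \sum_x g x * h x + 1 <= KL f g.
Proof.
move=> f0 g0 h0 f1; rewrite -f1 addrAC -big_split -sumrB /=.
apply: ler_sum => x _; have gh0 : 0 < g x * h x by exact: mulr_gt0.
have -> : ln (f x / g x) = ln (f x / (g x * h x)) + ln (h x).
  by rewrite -lnM ?posrE ?divr_gt0 // invfM mulrA divfK ?gt_eqF.
by have := le_sub_mul_ln_div (f0 x) gh0; rewrite mulrDr; lra.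
Qed.

Lemma ln_prod (I : finType) (F : I -> R) :
  (forall i, 0 < F i) -> ln (\prod_i F i) = \sum_i ln (F i).
Proof.
move=> F0; suff [] : 0 < \prod_i F i /\ ln (\prod_i F i) = \sum_i ln (F i) by [].
apply: (big_ind2 (fun a b => 0 < a /\ ln a = b)) => [|a b a' b' [a0 <-] [a'0 <-]|i].
- by rewrite ln1.
- by rewrite mulr_gt0 // lnM.
- by [].
Qed.

Definition mixture (I : finType) (C : {set I}) (g : I -> T -> R) (x : T) : R :=
  #|C|%:R^-1 * \sum_(c in C) g c x.

Lemma KL_mixture_le (I : finType) (C : {set I}) (f : T -> R) (g : I -> T -> R) c :
  c \in C -> (forall x, 0 < f x) -> (forall i x, 0 < g i x) -> \sum_x f x = 1 ->
  KL f (mixture C g) <= KL f (g c) + ln #|C|%:R.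
Proof.
move=> cC f0 g0 f1.
have C0 : 0 < #|C|%:R :> R by rewrite ltr0n card_gt0; apply/set0Pn; exists c.
have -> : ln #|C|%:R = \sum_x f x * ln #|C|%:R :> R by rewrite -mulr_suml f1 mul1r.
rewrite -big_split /=; apply: ler_sum => x _.
rewrite -mulrDr ler_pM2l //.
have gc_le : g c x / #|C|%:R <= mixture C g x.
  rewrite /mixture mulrC ler_pM2l ?invr_gt0 // (bigD1 c) //= lerDl.
  by apply: sumr_ge0 => i _; apply: ltW.
have mix0 : 0 < mixture C g x by apply: lt_le_trans gc_le; exact: divr_gt0.
have : ln (g c x / #|C|%:R) <= ln (mixture C g x) by rewrite ler_ln ?posrE ?divr_gt0.
by rewrite !ln_div ?posrE //; lra.
Qed.

Lemma mixture_gt0 (I : finType) (C : {set I}) (g : I -> T -> R) x :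
  C != set0 -> (forall i x, 0 < g i x) -> 0 < mixture C g x.
Proof.
move=> C0 g0; rewrite /mixture mulr_gt0 ?invr_gt0 ?ltr0n ?card_gt0 //.
have [c cC] := set0Pn _ C0; rewrite (bigD1 c) //= ltr_pwDl //.
by apply: sumr_ge0 => i _; exact: ltW.
Qed.

Lemma mixture_sum1 (I : finType) (C : {set I}) (g : I -> T -> R) :
  C != set0 -> (forall i, \sum_x g i x = 1) -> \sum_x mixture C g x = 1.
Proof.
move=> C0 g1; rewrite /mixture -mulr_sumr exchange_big /=.
under eq_bigr do rewrite g1.
by rewrite sumr_const mulVf // pnatr_eq0 -lt0n card_gt0.
Qed.

Lemma iid_gt0 n (f : T -> R) s : (forall x, 0 < f x) -> 0 < iid n f s.
Proof. by move=> f0; apply: prodr_gt0. Qed.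

Lemma sum_iid_marginal n (f h : T -> R) (k : 'I_n) : \sum_x f x = 1 ->
  \sum_s iid n f s * h (s k) = \sum_x f x * h x.
Proof.
move=> f1; pose F j x := if j == k then f x * h x else f x.
transitivity (\sum_(s : {ffun 'I_n -> T}) \prod_j F j (s j)).
  apply: eq_bigr => s _; rewrite /iid (bigD1 k) //= [RHS](bigD1 k) //= /F eqxx.
  by under [in RHS]eq_bigr => j /negbTE -> do []; rewrite mulrAC.
rewrite -(bigA_distr_bigA F) (bigD1 k) //= [X in _ * X]big1 ?mulr1 /F ?eqxx //.
by move=> j /negbTE ->; exact: f1.
Qed.

Lemma iid_sum1 n (f : T -> R) : \sum_x f x = 1 -> \sum_s iid n f s = 1.
Proof.
move=> f1; rewrite -(bigA_distr_bigA (fun=> f)) /=.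
by under eq_bigr do rewrite f1; rewrite prodr_const expr1n.
Qed.

Lemma KL_iid n (f g : T -> R) :
  (forall x, 0 < f x) -> (forall x, 0 < g x) -> \sum_x f x = 1 ->
  KL (iid n f) (iid n g) = n%:R * KL f g.
Proof.
move=> f0 g0 f1; transitivity (\sum_s \sum_k iid n f s * ln (f (s k) / g (s k))).
  apply: eq_bigr => s _; rewrite -mulr_sumr /iid -prodf_div ln_prod // => k.
  exact: divr_gt0.
rewrite exchange_big /=.
under eq_bigr do rewrite (@sum_iid_marginal n f (fun x => ln (f x / g x))) //.
by rewrite sumr_const card_ord mulr_natl.
Qed.

End KullbackLeibler.

Section Fano.
Variables (R : realType) (S I : finType) (P : I -> S -> R) (Q : S -> R).
Variables (phi : S -> I) (T : {set I}).
Hypotheses (P_gt0 : forall G s, 0 < P G s) (P_sum1 : forall G, \sum_s P G s = 1).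
Hypotheses (Q_gt0 : forall s, 0 < Q s) (Q_sum1 : \sum_s Q s = 1).

Let M : R := #|T|%:R.

Lemma sum_eq_indicator (y : I) : \sum_(G in T) ((y == G)%:R : R) = (y \in T)%:R.
Proof.
case: (boolP (y \in T)) => yT; last first.
  by rewrite big1 // => G GT; case: eqP => // eyG; rewrite eyG GT in yT.
rewrite (bigD1 y) //= eqxx big1 ?addr0 // => G /andP[_].
by rewrite eq_sym => /negbTE ->.
Qed.

Lemma sum_hit_weight_le (y : I) : \sum_(G in T) (if y == G then M else 1) <= 2 * M.
Proof.
have hitE G : (if y == G then M else 1) = 1 + (M - 1) * (y == G)%:R.
  by case: eqP => _; rewrite ?mulr1 ?mulr0 ?addr0 //; ring.
under eq_bigr do rewrite hitE.
rewrite big_split /= sumr_const -mulr_sumr sum_eq_indicator -/M.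
have : 0 <= M by exact: ler0n.
by case: (y \in T) => /=; nra.
Qed.

Lemma fano_sum :
  ln M * \sum_(G in T) \sum_(s | phi s == G) P G s <=
    \sum_(G in T) KL (P G) Q + M * ln 2.
Proof.
pose hit G s : R := if phi s == G then M else 1.
have hit_gt0 G s : G \in T -> 0 < hit G s.
  move=> GT; have : 1 <= M by rewrite ler1n card_gt0; apply/set0Pn; exists G.
  by rewrite /hit; case: eqP => _ //; lra.
have lnE G s : G \in T -> P G s * ln (hit G s / 2) =
    (if phi s == G then P G s * ln M else 0) - P G s * ln 2.
  move=> GT; rewrite ln_div ?posrE ?hit_gt0 // mulrBr /hit.
  by case: eqP => _ //; rewrite ln1 mulr0.
have lower G : G \in T ->
    ln M * \sum_(s | phi s == G) P G s - ln 2 + 1 - 2^-1 * \sum_s Q s * hit G s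
      <= KL (P G) Q.
  move=> GT; have half_hit_gt0 s : 0 < hit G s / 2 by rewrite divr_gt0 ?hit_gt0.
  have := KL_ge_variational (P_gt0 G) Q_gt0 half_hit_gt0 (P_sum1 G).
  under eq_bigr => s _ do rewrite lnE //.
  rewrite sumrB -big_mkcond -!mulr_suml P_sum1 mul1r.
  under [X in _ - X + 1]eq_bigr do rewrite mulrA.
  rewrite -mulr_suml; lra.
have sum_Qhit : \sum_(G in T) \sum_s Q s * hit G s <= 2 * M.
  rewrite exchange_big /=; apply: le_trans (_ : \sum_s Q s * (2 * M) <= _).
    apply: ler_sum => s _; rewrite -mulr_sumr.
    by apply: ler_wpM2l; [exact: ltW | exact: sum_hit_weight_le].
  by rewrite -mulr_suml Q_sum1 mul1r.
have := ler_sum (index_enum I) lower.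
rewrite sumrB big_split sumrB /= !sumr_const -!mulr_sumr -[ln 2 *+ _]mulr_natl -/M; lra.
Qed.

Lemma fano_success_le (K : R) : (1 < #|T|)%N ->
  (forall G, G \in T -> KL (P G) Q <= K) ->
  \sum_(G in T) \sum_(s | phi s == G) P G s <= M * ((K + ln 2) / ln M).
Proof.
move=> T1 KL_le; have lnM_gt0 : 0 < ln M by rewrite ln_gt0 // ltr1n.
have sum_KL : \sum_(G in T) KL (P G) Q <= M * K.
  by apply: le_trans (ler_sum _ KL_le) _; rewrite sumr_const mulr_natl.
rewrite mulrA ler_pdivlMr //; have := fano_sum; nra.
Qed.

End Fano.

Section IsingSamples.
Variables (R : realType) (p n : nat) (lam : R).

Lemma ising_Z_gt0 (G : graph p) : 0 < ising_Z lam G.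
Proof.
rewrite /ising_Z (bigD1 [ffun=> true]) //= ltr_pwDl ?expR_gt0 //.
by apply: sumr_ge0 => x _; apply: ltW; exact: expR_gt0.
Qed.

Lemma ising_gt0 (G : graph p) x : 0 < ising lam G x.
Proof. by rewrite divr_gt0 ?expR_gt0 ?ising_Z_gt0. Qed.

Lemma ising_sum1 (G : graph p) : \sum_x ising lam G x = 1.
Proof. by rewrite /ising -mulr_suml divff // gt_eqF ?ising_Z_gt0. Qed.

Lemma err_probE (phi : samples n p -> graph p) G :
  err_prob lam phi G = 1 - \sum_(s | phi s == G) iid n (ising lam G) s.
Proof.
by rewrite -(iid_sum1 n (ising_sum1 G)) (bigID (fun s => phi s == G)) /= addrC addrK.
Qed.

Lemma err_prob_le_p_max (cG : {set graph p}) (phi : samples n p -> graph p) G :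
  G \in cG -> err_prob lam phi G <= p_max lam cG phi.
Proof. by move=> GcG; apply: (le_bigmax_cond _ (P := fun G => G \in cG)). Qed.

Lemma sum_err_prob_le_p_max (cG T : {set graph p}) (phi : samples n p -> graph p) :
  T \subset cG -> \sum_(G in T) err_prob lam phi G <= #|T|%:R * p_max lam cG phi.
Proof.
move=> TcG; apply: (@le_trans _ _ (\sum_(G in T) p_max lam cG phi)).
  by apply: ler_sum => G GT; apply: err_prob_le_p_max; exact: (subsetP TcG).
by rewrite sumr_const mulr_natl.
Qed.

End IsingSamples.

Theorem corollary2 (R : realType) (p n : nat) (lam : R) (cG T : {set graph p}) :
  (forall G, G \in cG -> is_graph G) ->
  0 < lam ->
  T \subset cG ->
  (1 < #|T|)%N ->
  forall (eps : R) (C : {set graph p}),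
    0 < eps ->
    is_covering lam cG T C eps ->
    forall phi : samples n p -> graph p,
      (forall s, phi s \in cG) ->
      p_max lam cG phi >=
        1 - (ln (#|C|%:R) + n%:R * eps + ln 2) / ln (#|T|%:R).
Proof.
move=> _ _ TcG T1 eps C _ [_ cover] phi _.
pose P (G : graph p) := iid n (ising lam G); pose Q := mixture C P.
set M := #|T|%:R : R; set K := ln #|C|%:R + n%:R * eps.
have P_gt0 G s : 0 < P G s by apply: iid_gt0 => x; exact: ising_gt0.
have P_sum1 G : \sum_s P G s = 1 by apply: iid_sum1; exact: ising_sum1.
have [G0 G0T] : exists G0, G0 \in T by apply/set0Pn; rewrite -card_gt0 ltnW.
have C0 : C != set0 by have [c cC _] := cover _ G0T; apply/set0Pn; exists c.
have KL_le G : G \in T -> KL (P G) Q <= K.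
  case/cover=> c cC KLc; apply: le_trans (KL_mixture_le cC (P_gt0 G) P_gt0 (P_sum1 G)) _.
  rewrite KL_iid ?ising_sum1 // => [|x|x]; try exact: ising_gt0.
  by have := ler_wpM2l (ler0n R n) KLc; rewrite /K; lra.
have success_le := fano_success_le phi P_gt0 P_sum1
  (fun s => mixture_gt0 s C0 P_gt0) (mixture_sum1 C0 P_sum1) T1 KL_le.
have avg := sum_err_prob_le_p_max lam phi TcG.
rewrite (eq_bigr _ (fun G _ => err_probE lam phi G)) sumrB sumr_const in avg.
set S := \sum_(G in T) _ in success_le avg.
have M_gt0 : 0 < M by rewrite ltr0n ltnW.
rewrite -(ler_pM2l M_gt0); nra.
Qed.
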